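(* Let $G$ be a finite abelian group, $M$ a $\mathbb{Z}[G]$-lattice and $r\ge1$. Then the map $P$ restricts to an isomorphism of $\mathbb{Z}[G]$-modules \[ \wedge_0^rM\xrightarrow{\ \sim\ }(M,G)^r_\star . \]
   Context: A $\mathbb{Z}[G]$-lattice is a finitely generated $\mathbb{Z}[G]$-module that is free as a $\mathbb{Z}$-module; write $m^\sigma$ for the action of $\sigma\in G$ on $m\in M$. For a $\mathbb{Z}[G]$-module $N$ write $\mathbb{Q}N=\mathbb{Q}\otimes_{\mathbb{Z}}N$ and $N[G]=N\otimes_{\mathbb{Z}}\mathbb{Z}[G]$. Let $G$ act on $(\bigotimes^r_{\mathbb{Z}}M)[G]$ by $\sigma(m_1\otimes\dots\otimes m_r\otimes[\tau])=m_1\otimes\dots\otimes m_r\otimes[\sigma\tau]$, and for $\sigma\in G$ let $c_\sigma(m_1\otimes\dots\otimes m_r\otimes[\tau])=m_1^\sigma\otimes m_2\otimes\dots\otimes m_r\otimes[\tau]$. The symmetric group $\mathfrak{S}_r$ acts on $(\bigotimes^rM)[G]$ by permuting the tensor factors of $\bigotimes^rM$; $m$ is antisymmetric if $fm=\mathrm{sgn}(f)m$ for all $f\in\mathfrak S_r$. Define $(M,G)^r_\star=\{m\in(\bigotimes^r_{\mathbb{Z}}M)[G]: m\text{ antisymmetric and }c_\sigma(m)=\sigma m\ \forall\sigma\in G\}$. For $\varphi_1,\dots,\varphi_r\in\mathrm{Hom}_{\mathbb{Z}[G]}(M,\mathbb{Z}[G])$ let $\varphi_1\wedge\dots\wedge\varphi_r$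 be the map $\mathbb{Q}\wedge^r_{\mathbb{Z}[G]}M\to\mathbb{Q}[G]$, $m_1\wedge\dots\wedge m_r\mapsto\det(\varphi_i(m_j))$. Rubin's lattice is $\wedge_0^rM=\{m\in\mathbb{Q}\wedge^r_{\mathbb{Z}[G]}M:(\varphi_1\wedge\dots\wedge\varphi_r)(m)\in\mathbb{Z}[G]\ \forall\varphi_1,\dots,\varphi_r\}$. Define the $\mathbb{Z}[G]$-linear map $P:\mathbb{Q}\wedge^r_{\mathbb{Z}[G]}M\to\mathbb{Q}(\bigotimes^r_{\mathbb{Z}}M)[G]$ by $P(m_1\wedge\dots\wedge m_r)=\sum_{f\in\mathfrak S_r}\mathrm{sgn}(f)\bigotimes_{j=1}^r\Big(\sum_{\sigma\in G}m_{f(j)}^{\sigma^{-1}}[\sigma]\Big)$, where for elements $\sum_\sigma a_{j,\sigma}[\sigma]\in M[G]$ ($1\le j\le r$) their tensor $\bigotimes_j$ means $\sum_{\sigma_1,\dots,\sigma_r}a_{1,\sigma_1}\otimes\dots\otimes a_{r,\sigma_r}[\sigma_1\cdots\sigma_r]$. *)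

(* Concrete model of a Z[G]-lattice: M = Z^n (row vectors)
   with G acting by integer matrices rho sigma, m^sigma := m *m rho sigma. *)
From HB Require Import structures.
From mathcomp Require Import all_boot all_order all_fingroup all_algebra.
Set Implicit Arguments. Unset Strict Implicit. Unset Printing Implicit Defensive.
Import Order.TTheory GRing.Theory Num.Theory.
Local Open Scope ring_scope.

Definition fscale (T : finType) (c : rat) (w : {ffun T -> rat}) : {ffun T -> rat} :=
  [ffun x => c * w x].

Section Defs.
Variables (gT : finGroupType) (n r : nat) (rho : gT -> 'M[int]_n).

Definition rhoQ (s : gT) : 'M[rat]_n := map_mx (fun z : int => z%:~R) (rho s).

Definition is_lattice_rep : Prop :=
  rho 1%g = 1%:M /\ forall s t : gT, rho (s * t)%g = rho s *m rho t.

(* index set of the standard Z-basis e_{i_1} (x) ... (x) e_{i_r} of (x)^r M *)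
Local Notation tidx := {ffun 'I_r -> 'I_n}.
(* Q (x)^r_Z M *)
Local Notation tens := {ffun tidx -> rat}.
(* Q ((x)^r_Z M)[G] *)
Local Notation gtens := {ffun tidx * gT -> rat}.
Local Notation qg := {ffun gT -> rat}.

Definition e_ (i : 'I_n) : 'rV[rat]_n := delta_mx 0 i.

Definition ptens (v : 'I_r -> 'rV[rat]_n) : tens :=
  [ffun k : tidx => \prod_(j < r) v j 0 (k j)].

Definition upd (v : 'I_r -> 'rV[rat]_n) (i : 'I_r) (w : 'rV[rat]_n) :=
  fun j => if j == i then w else v j.

(* generators of the kernel of Q (x)^r_Z M ->> Q /\^r_{Z[G]} M
   (= /\^r_{Q[G]} QM): tensors with two equal entries, and the
   Q[G]-balancing relations  ..(sigma m_i).. - ..(sigma m_j)..  *)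
Definition wedge_gen (w : tens) : Prop :=
  (exists (v : 'I_r -> 'rV[rat]_n) (i j : 'I_r),
      i != j /\ v i = v j /\ w = ptens v) \/
  (exists (v : 'I_r -> 'rV[rat]_n) (i j : 'I_r) (s : gT),
      w = ptens (upd v i (v i *m rhoQ s)) - ptens (upd v j (v j *m rhoQ s))).

(* t lies in the Q-span of the generators, i.e. t = 0 in Q /\^r_{Z[G]} M *)
Definition wedge_rel (t : tens) : Prop :=
  exists (k : nat) (c : 'I_k -> rat) (w : 'I_k -> tens),
    (forall l, wedge_gen (w l)) /\ t = \sum_(l < k) fscale (c l) (w l).

(* Z[G]-action on Q /\^r M (sigma acts on slot i0) on representatives *)
Definition tact (i0 : 'I_r) (s : gT) (t : tens) : tens :=
  [ffun k : tidx => \sum_(l < n) t (finfun (fun j => if j == i0 then l else k j))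
                                  * rhoQ s l (k i0)].

(* tensor product of elements sum_sigma a_{j,sigma}[sigma] of QM[G] *)
Definition gtensor (a : 'I_r -> gT -> 'rV[rat]_n) : gtens :=
  [ffun p : tidx * gT =>
     \sum_(s : {ffun 'I_r -> gT} | (\prod_(j < r) s j)%g == p.2)
        \prod_(j < r) a j (s j) 0 (p.1 j)].

Definition P_pure (v : 'I_r -> 'rV[rat]_n) : gtens :=
  \sum_(f : 'S_r) fscale ((-1) ^+ f) (gtensor (fun j s => v (f j) *m rhoQ (s^-1)%g)).

Definition Pmap (t : tens) : gtens :=
  \sum_(k : tidx) fscale (t k) (P_pure (fun j => e_ (k j))).

(* Hom_{Z[G]}(M, Z[G]) : phi i = phi(e_i) in Z[G] *)
Definition phiQ (phi : 'I_n -> gT -> int) (m : 'rV[rat]_n) : qg :=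
  [ffun t => \sum_(i < n) m 0 i * (phi i t)%:~R].

Definition is_ZG_hom (phi : 'I_n -> gT -> int) : Prop :=
  forall (s : gT) (i : 'I_n),
    phiQ phi (e_ i *m rhoQ s) = [ffun t => (phi i (s^-1 * t)%g)%:~R].

Definition qgprod (x : 'I_r -> qg) : qg :=
  [ffun t => \sum_(s : {ffun 'I_r -> gT} | (\prod_(j < r) s j)%g == t)
                \prod_(j < r) x j (s j)].

Definition wedge_phi (phis : 'I_r -> 'I_n -> gT -> int) (t : tens) : qg :=
  \sum_(k : tidx) fscale (t k)
     (\sum_(f : 'S_r) fscale ((-1) ^+ f) (qgprod (fun a => phiQ (phis a) (e_ (k (f a)))))).

(* Rubin's lattice /\_0^r M (on representatives) *)
Definition rubin (t : tens) : Prop :=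
  forall phis : 'I_r -> 'I_n -> gT -> int,
    (forall a, is_ZG_hom (phis a)) ->
    forall s : gT, wedge_phi phis t s \is a Num.int.

Definition grp_act (s : gT) (y : gtens) : gtens :=
  [ffun p : tidx * gT => y (p.1, (s^-1 * p.2)%g)].

Definition cmap (i0 : 'I_r) (s : gT) (y : gtens) : gtens :=
  [ffun p : tidx * gT =>
     \sum_(l < n) y (finfun (fun j => if j == i0 then l else p.1 j), p.2)
                  * rhoQ s l (p.1 i0)].

Definition permact (f : 'S_r) (y : gtens) : gtens :=
  [ffun p : tidx * gT => y (finfun (fun j => p.1 (f j)), p.2)].

(* (M,G)^r_star, with i0 the first tensor slot *)
Definition star (i0 : 'I_r) (y : gtens) : Prop :=
  (forall p, y p \is a Num.int) /\
  (forall f : 'S_r, permact f y = fscale ((-1) ^+ f) y) /\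
  (forall s : gT, cmap i0 s y = grp_act s y).

End Defs.

(* The coefficient of P(t) at (k, g) is a signed sum, over permutations f and
   factorisations g = x_1 ... x_r, of coordinates of twisted tensors
   (m_(f j) x_j^-1)_j.  Since G is abelian, moving a group element from one
   slot to another only reshuffles the factorisations of g; hence P kills the
   Z[G]-balancing relations (and, being an antisymmetrisation, the alternating
   ones), commutes with the G-action, and satisfies c_s = s in every slot.

   The coefficient of P(t) at (k, g) is (phi_1 /\ ... /\ phi_r)(t)(g) for the
   coordinate homomorphisms phi_a(m) = sum_s (m s^-1)_(k_a) [s], and every
   Z[G]-homomorphism M -> Z[G] is an integral combination of these; so t lies
   in Rubin's lattice iff P(t) is integral.

   Finally y |-> y(_, 1) / (r! |G|^(r-1)) inverts P up to relations.  Modulo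
   the relations each summand of P(t) at (_, 1) equals t (gather the group
   elements, whose product is 1, into one slot, then undo the permutation):
   this gives injectivity.  Conversely, for y in (M,G)^r_star, antisymmetry
   and c_s y = s y turn each summand of P of the average of y back into y. *)

From HB Require Import structures.
From mathcomp Require Import all_boot all_order all_fingroup all_algebra.
From mathcomp Require Import ring lra.
Set Implicit Arguments. Unset Strict Implicit. Unset Printing Implicit Defensive.
Import Order.TTheory GRing.Theory Num.Theory.
Local Open Scope ring_scope.

Section AbelianGroup.
Variable gT : finGroupType.
Hypothesis mulgC : commutative (@mulg gT).

HB.instance Definition _ := Monoid.isComLaw.Build gT 1%g mulg (@mulgA gT) mulgC (@mul1g gT).

Section Factorisations.
Variable r : nat.
Local Notation gtuple := {ffun 'I_r -> gT}.

Definition kill_slot (j : 'I_r) (x : gtuple) : gtuple :=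
  [ffun i => if i == j then 1%g else x i].

Definition shift_slot (j : 'I_r) (s : gT) (x : gtuple) : gtuple :=
  [ffun i => if i == j then (x i * s)%g else x i].

Definition fibre_card (g : gT) : nat := #|[set x : gtuple | (\prod_j x j == g)%g]|.

Lemma prod_kill_slot (j : 'I_r) (x : gtuple) : (\prod_i x i = \prod_i kill_slot j x i * x j)%g.
Proof.
rewrite (bigD1 j) // [X in (_ = X * _)%g](bigD1 j) //= ffunE eqxx mul1g mulgC.
by congr (_ * _)%g; apply: eq_bigr => i /negbTE ij; rewrite ffunE ij.
Qed.

Lemma prod_shift_slot (j : 'I_r) (s : gT) (x : gtuple) : (\prod_i shift_slot j s x i = (\prod_i x i) * s)%g.
Proof.
rewrite (bigD1 j) // [X in (_ = X * _)%g](bigD1 j) //= ffunE eqxx.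
rewrite -!mulgA [(s * _)%g]mulgC; congr (_ * (_ * _))%g.
by apply: eq_bigr => i /negbTE ij; rewrite ffunE ij.
Qed.

Lemma shift_slotK (j : 'I_r) (s : gT) : cancel (shift_slot j s) (shift_slot j s^-1).
Proof. by move=> x; apply/ffunP=> i; rewrite !ffunE; case: ifP => ij; rewrite ?ij ?mulgK. Qed.

Lemma sum_shift_slot (R : nmodType) (F : gtuple -> R) (j : 'I_r) (s g : gT) :
  \sum_(x : gtuple | (\prod_i x i == g)%g) F (shift_slot j s x) =
  \sum_(x : gtuple | (\prod_i x i == g * s)%g) F x.
Proof.
have shift_bij : bijective (shift_slot j s).
  by exists (shift_slot j s^-1); [apply: shift_slotK | rewrite -{2}[s]invgK; apply: shift_slotK].
rewrite [RHS](reindex _ (onW_bij _ shift_bij)).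
by apply: eq_bigl => x; rewrite prod_shift_slot (inj_eq (mulIg s)).
Qed.

Lemma sum_fibre_const (R : nmodType) (c : R) (g : gT) :
  \sum_(x : gtuple | (\prod_i x i == g)%g) c = c *+ fibre_card g.
Proof. by rewrite -sumr_const; apply: eq_bigl => x; rewrite inE. Qed.

Lemma fibre_card_const (j : 'I_r) (g : gT) : fibre_card g = fibre_card 1.
Proof.
apply/eqP; rewrite -(@eqr_nat rat) -!sum_fibre_const; apply/eqP.
by have := sum_shift_slot (fun _ => 1 : rat) j g 1; rewrite mul1g => <-.
Qed.

Lemma fibre_card1_gt0 : (0 < fibre_card 1)%N.
Proof. by apply/card_gt0P; exists [ffun => 1%g]; rewrite inE big1 // => i _; rewrite ffunE. Qed.

Lemma kill_slot_ind (Q : pred 'I_r) (P : gtuple -> Prop) :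
  (forall x : gtuple, (forall j, Q j -> x j = 1%g) -> P x) ->
  (forall (x : gtuple) j, Q j -> P (kill_slot j x) -> P x) ->
  forall x : gtuple, P x.
Proof.
move=> Pbase Pstep x; pose S (x : gtuple) := [set j | Q j && (x j != 1%g)].
have [m] := ubnP #|S x|; elim: m x => // m IH x.
case: (set_0Vmem (S x)) => [S0 | [j Sj]] ltSm.
  apply: Pbase => j Qj; apply/eqP; apply: contraT => xj.
  have : j \in S x by rewrite inE Qj.
  by rewrite S0 inE.
move: (Sj); rewrite inE => /andP[Qj _]; apply: (Pstep _ j Qj); apply: IH.
have -> : S (kill_slot j x) = S x :\ j.
  by apply/setP => i; rewrite !inE ffunE; case: (eqVneq i j) => [->|]; rewrite ?eqxx ?andbF.
by rewrite (cardsD1 j) Sj in ltSm.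
Qed.

End Factorisations.

Section Lattice.
Variables (n r : nat) (rho : gT -> 'M[int]_n).
Hypothesis rho_rep : is_lattice_rep rho.

Local Notation tidx := {ffun 'I_r -> 'I_n}.
Local Notation tens := {ffun tidx -> rat}.
Local Notation gtens := {ffun tidx * gT -> rat}.
Local Notation gtuple := {ffun 'I_r -> gT}.
Local Notation rq := (rhoQ rho).
Local Notation set_slot k i l := (finfun (fun j => if j == i then l else k j)).

Lemma rhoQ1 : rq 1%g = 1%:M.
Proof. by case: rho_rep => rho1 _; apply/matrixP=> i j; rewrite /rhoQ rho1 !mxE; case: (i == j). Qed.

Lemma rhoQM (s t : gT) : rq (s * t)%g = rq s *m rq t.
Proof. by case: rho_rep => _ rhoM; rewrite /rhoQ rhoM map_mxM. Qed.

Lemma rhoQC (s t : gT) : rq s *m rq t = rq t *m rq s.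
Proof. by rewrite -!rhoQM mulgC. Qed.

Lemma rhoQE (s : gT) (i c : 'I_n) : rq s i c = (rho s i c)%:~R.
Proof. by rewrite mxE. Qed.

Lemma e_mulmx (i : 'I_n) (B : 'M[rat]_n) (c : 'I_n) : (e_ i *m B) 0 c = B i c.
Proof. by rewrite /e_ -rowE mxE. Qed.

Lemma prod_eq_entries (k k' : tidx) : \prod_j ((k j == k' j)%:R : rat) = (k == k')%:R.
Proof.
have [<-|neq] := eqVneq k k'; first by apply: big1 => j _; rewrite eqxx.
have [j /negbTE kj] : exists j, k j != k' j.
  apply/existsP; apply: contraR neq => /existsPn kk'.
  by apply/eqP/ffunP => j; apply/eqP/negPn/kk'.
by rewrite (bigD1 j) //= kj mul0r.
Qed.

Lemma ptens_basis (k k' : tidx) : ptens (fun j => e_ (k j)) k' = (k == k')%:R.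
Proof. by rewrite ffunE -prod_eq_entries; apply: eq_bigr => j _; rewrite mxE eqxx eq_sym. Qed.

Lemma tens_basis_decomp (t : tens) : t = \sum_k fscale (t k) (ptens (fun j => e_ (k j))).
Proof.
apply/ffunP => k'; rewrite sum_ffunE (bigD1 k') //= ffunE ptens_basis eqxx mulr1.
by rewrite big1 ?addr0 // => k /negbTE kk'; rewrite ffunE ptens_basis kk' mulr0.
Qed.

Lemma eq_ptens (v w : 'I_r -> 'rV[rat]_n) : v =1 w -> ptens v = ptens w.
Proof. by move=> vw; apply/ffunP => k; rewrite !ffunE; apply: eq_bigr => j _; rewrite vw. Qed.

Definition tcoef (u : 'I_r -> 'rV[rat]_n) (x : gtuple) (k : tidx) : rat :=
  \prod_j (u j *m rq (x j)^-1) 0 (k j).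

Definition Pcoef (v : 'I_r -> 'rV[rat]_n) (k : tidx) (g : gT) : rat :=
  \sum_(f : 'S_r) (-1) ^+ f *
    \sum_(x : gtuple | (\prod_j x j == g)%g) tcoef (fun j => v (f j)) x k.

Lemma P_pureE (v : 'I_r -> 'rV[rat]_n) (k : tidx) (g : gT) : P_pure rho v (k, g) = Pcoef v k g.
Proof. by rewrite sum_ffunE; apply: eq_bigr => f _; rewrite !ffunE. Qed.

Lemma PmapE (t : tens) (k : tidx) (g : gT) :
  Pmap rho t (k, g) = \sum_k0 t k0 * Pcoef (fun j => e_ (k0 j)) k g.
Proof. by rewrite sum_ffunE; apply: eq_bigr => k0 _; rewrite ffunE P_pureE. Qed.

Lemma sum_ptens_tcoef (v : 'I_r -> 'rV[rat]_n) (f : 'S_r) (x : gtuple) (k' : tidx) :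
  \sum_(k : tidx) ptens v k * tcoef (fun j => e_ (k (f j))) x k' = tcoef (fun j => v (f j)) x k'.
Proof.
rewrite /tcoef; under [RHS]eq_bigr do rewrite mxE.
rewrite bigA_distr_bigA /= (reindex (fun kap : tidx => [ffun j => kap ((f^-1)%g j)])); last first.
  by apply: onW_bij; exists (fun k : tidx => [ffun j => k (f j)]) => kap;
     apply/ffunP => j; rewrite !ffunE ?permK ?permKV.
apply: eq_bigr => kap _; rewrite ffunE (reindex_inj (@perm_inj _ f)) -big_split /=.
by apply: eq_bigr => j _; rewrite !ffunE permK e_mulmx.
Qed.

Lemma Pmap_ptens (v : 'I_r -> 'rV[rat]_n) (k : tidx) (g : gT) : Pmap rho (ptens v) (k, g) = Pcoef v k g.
Proof.
rewrite PmapE; under eq_bigr do rewrite mulr_sumr.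
rewrite exchange_big /=; apply: eq_bigr => f _.
under eq_bigr do rewrite mulrCA mulr_sumr.
rewrite -mulr_sumr exchange_big /=; congr (_ * _); apply: eq_bigr => x _.
exact: sum_ptens_tcoef.
Qed.

Lemma Pmap_sum_fscale (I : finType) (c : I -> rat) (w : I -> tens) :
  Pmap rho (\sum_i fscale (c i) (w i)) = \sum_i fscale (c i) (Pmap rho (w i)).
Proof.
apply/ffunP => -[k g]; rewrite PmapE !sum_ffunE.
under eq_bigr do rewrite sum_ffunE mulr_suml.
rewrite exchange_big /=; apply: eq_bigr => i _.
rewrite !ffunE PmapE mulr_sumr; apply: eq_bigr => k0 _.
by rewrite ffunE mulrA.
Qed.

Lemma Pmap_sub (a b : tens) : Pmap rho (a - b) = Pmap rho a - Pmap rho b.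
Proof.
apply/ffunP => -[k g]; rewrite !ffunE !PmapE -sumrB.
by apply: eq_bigr => k0 _; rewrite !ffunE mulrBl.
Qed.

Lemma Pcoef_alt (v : 'I_r -> 'rV[rat]_n) (i j : 'I_r) (k : tidx) (g : gT) :
  i != j -> v i = v j -> Pcoef v k g = 0.
Proof.
move=> ij vij; suff : Pcoef v k g = - Pcoef v k g by lra.
rewrite {1}/Pcoef (reindex_inj (mulIg (tperm i j))) /Pcoef -sumrN.
apply: eq_bigr => f _ /=; rewrite odd_permM odd_tperm ij signr_addb mulrN1 mulNr.
congr (- (_ * _)); apply: eq_bigr => x _; apply: eq_bigr => l _; rewrite permM.
by case: tpermP => [->|->|]; rewrite ?vij.
Qed.

Lemma Pcoef_upd (v : 'I_r -> 'rV[rat]_n) (i : 'I_r) (s : gT) (k : tidx) (g : gT) :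
  Pcoef (upd v i (v i *m rq s)) k g = Pcoef v k (s^-1 * g)%g.
Proof.
rewrite /Pcoef; apply: eq_bigr => f _; congr (_ * _).
rewrite [(s^-1 * g)%g]mulgC -(sum_shift_slot _ ((f^-1)%g i)); apply: eq_bigr => x _.
apply: eq_bigr => j _; rewrite /upd ffunE (canF_eq (permK f)).
by case: eqP => [->|_] //; rewrite permKV invMg invgK rhoQM mulmxA.
Qed.

Lemma Pmap_wedge_rel (t : tens) : wedge_rel rho t -> Pmap rho t = 0.
Proof.
case=> m [c [w [wgen ->]]]; rewrite Pmap_sum_fscale; apply: big1 => l _.
suff -> : Pmap rho (w l) = 0 by apply/ffunP => p; rewrite !ffunE mulr0.
case: (wgen l) => [[v [i [j [ij [vij ->]]]]] | [v [i [j [s ->]]]]];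
  apply/ffunP => -[k g]; rewrite ffunE.
  by rewrite Pmap_ptens (Pcoef_alt _ _ ij vij).
by rewrite Pmap_sub !ffunE !Pmap_ptens !Pcoef_upd subrr.
Qed.

Lemma sum_prod_set_slot (X : 'I_r -> 'rV[rat]_n) (B : 'M[rat]_n) (i0 : 'I_r) (k : tidx) :
  \sum_(l < n) (\prod_j X j 0 (set_slot k i0 l j)) * B l (k i0) =
  \prod_j (if j == i0 then X j *m B else X j) 0 (k j).
Proof.
rewrite [RHS](bigD1 i0) //= eqxx mxE mulr_suml; apply: eq_bigr => l _.
rewrite (bigD1 i0) //= ffunE eqxx mulrAC; congr (_ * _).
by apply: eq_bigr => j /negbTE ji; rewrite ffunE ji.
Qed.

Lemma tact_ptens (i0 : 'I_r) (s : gT) (v : 'I_r -> 'rV[rat]_n) :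
  tact rho i0 s (ptens v) = ptens (upd v i0 (v i0 *m rq s)).
Proof.
apply/ffunP => k; rewrite !ffunE; under eq_bigr do rewrite ffunE.
by rewrite sum_prod_set_slot; apply: eq_bigr => j _; rewrite /upd; case: eqP => // ->.
Qed.

Lemma tact_sum_fscale (i0 : 'I_r) (s : gT) (I : finType) (c : I -> rat) (w : I -> tens) :
  tact rho i0 s (\sum_i fscale (c i) (w i)) = \sum_i fscale (c i) (tact rho i0 s (w i)).
Proof.
apply/ffunP => k; rewrite ffunE !sum_ffunE.
under eq_bigr do rewrite sum_ffunE mulr_suml.
rewrite exchange_big /=; apply: eq_bigr => i _.
rewrite !ffunE mulr_sumr; apply: eq_bigr => l _.
by rewrite ffunE mulrA.
Qed.

Lemma grp_act_sum_fscale (s : gT) (I : finType) (c : I -> rat) (w : I -> gtens) :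
  grp_act s (\sum_i fscale (c i) (w i)) = \sum_i fscale (c i) (grp_act s (w i)).
Proof. by apply/ffunP => p; rewrite ffunE !sum_ffunE; apply: eq_bigr => i _; rewrite !ffunE. Qed.

Lemma Pmap_tact (i0 : 'I_r) (s : gT) (t : tens) :
  Pmap rho (tact rho i0 s t) = grp_act s (Pmap rho t).
Proof.
rewrite {1 2}(tens_basis_decomp t) tact_sum_fscale !Pmap_sum_fscale grp_act_sum_fscale.
apply: eq_bigr => k _; congr fscale; rewrite tact_ptens.
by apply/ffunP => -[k' g]; rewrite ffunE /= !Pmap_ptens Pcoef_upd.
Qed.

Lemma tcoef_set_slot (u : 'I_r -> 'rV[rat]_n) (i0 : 'I_r) (s : gT) (x : gtuple) (k : tidx) :
  \sum_(l < n) tcoef u x (set_slot k i0 l) * rq s l (k i0) = tcoef u (shift_slot i0 s^-1 x) k.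
Proof.
rewrite /tcoef sum_prod_set_slot; apply: eq_bigr => j _; rewrite ffunE.
by case: eqP => // ->; rewrite invMg invgK rhoQM rhoQC mulmxA.
Qed.

Lemma Pcoef_set_slot (v : 'I_r -> 'rV[rat]_n) (i0 : 'I_r) (s : gT) (k : tidx) (g : gT) :
  \sum_(l < n) Pcoef v (set_slot k i0 l) g * rq s l (k i0) = Pcoef v k (s^-1 * g)%g.
Proof.
rewrite /Pcoef; under eq_bigr do rewrite mulr_suml.
rewrite exchange_big /=; apply: eq_bigr => f _.
under eq_bigr do rewrite -mulrA mulr_suml.
rewrite -mulr_sumr exchange_big /=; congr (_ * _).
under eq_bigr do rewrite tcoef_set_slot.
by rewrite (sum_shift_slot (fun x => tcoef (fun j => v (f j)) x k)) mulgC.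
Qed.

Lemma Pcoef_perm (v : 'I_r -> 'rV[rat]_n) (f : 'S_r) (k : tidx) (g : gT) :
  Pcoef v [ffun j => k (f j)] g = (-1) ^+ f * Pcoef v k g.
Proof.
rewrite /Pcoef (reindex_inj (mulgI f)) mulr_sumr; apply: eq_bigr => h _ /=.
rewrite odd_permM signr_addb -mulrA; congr (_ * (_ * _)).
rewrite (reindex (fun y : gtuple => [ffun j => y (f j)])); last first.
  by apply: onW_bij; exists (fun y : gtuple => [ffun j => y ((f^-1)%g j)]) => y;
     apply/ffunP => j; rewrite !ffunE ?permK ?permKV.
apply: eq_big => [y | y _].
  congr (_ == _); rewrite [RHS](reindex_inj (@perm_inj _ f)).
  by apply: eq_bigr => j _; rewrite ffunE.
by rewrite /tcoef [RHS](reindex_inj (@perm_inj _ f)); apply: eq_bigr => j _; rewrite permM !ffunE.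
Qed.

Lemma Pmap_permact (f : 'S_r) (t : tens) :
  permact f (Pmap rho t) = fscale ((-1) ^+ f) (Pmap rho t).
Proof.
apply/ffunP => -[k g]; rewrite !ffunE /= !PmapE mulr_sumr.
by apply: eq_bigr => k0 _; rewrite Pcoef_perm mulrCA.
Qed.

Lemma Pmap_cmap (i0 : 'I_r) (s : gT) (t : tens) :
  cmap rho i0 s (Pmap rho t) = grp_act s (Pmap rho t).
Proof.
apply/ffunP => -[k g]; rewrite !ffunE /= PmapE.
under eq_bigr do rewrite PmapE mulr_suml.
rewrite exchange_big /=; apply: eq_bigr => k0 _.
by rewrite -(Pcoef_set_slot _ i0) mulr_sumr; apply: eq_bigr => l _; rewrite mulrA.
Qed.

Definition coord_hom (k : tidx) (a : 'I_r) : 'I_n -> gT -> int :=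
  fun i x => rho (x^-1)%g i (k a).

Lemma phiQ_e (phi : 'I_n -> gT -> int) (i : 'I_n) (x : gT) : phiQ phi (e_ i) x = (phi i x)%:~R.
Proof.
rewrite ffunE (bigD1 i) //= mxE !eqxx mul1r big1 ?addr0 // => l /negbTE li.
by rewrite mxE li andbF mul0r.
Qed.

Lemma coord_hom_ZG (k : tidx) (a : 'I_r) : is_ZG_hom rho (coord_hom k a).
Proof.
move=> s i; apply/ffunP => x; rewrite !ffunE; under eq_bigr do rewrite e_mulmx.
rewrite /coord_hom -rhoQE invMg invgK mulgC rhoQM mxE.
by apply: eq_bigr => l _; rewrite (rhoQE x^-1).
Qed.

Lemma wedge_phi_coord (t : tens) (k : tidx) (g : gT) :
  wedge_phi (coord_hom k) t g = Pmap rho t (k, g).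
Proof.
rewrite sum_ffunE PmapE; apply: eq_bigr => k0 _; rewrite ffunE sum_ffunE; congr (_ * _).
apply: eq_bigr => f _; rewrite !ffunE; congr (_ * _); apply: eq_bigr => x _.
by apply: eq_bigr => j _; rewrite phiQ_e e_mulmx rhoQE.
Qed.

Lemma ZG_hom_entry (phi : 'I_n -> gT -> int) : is_ZG_hom rho phi ->
  forall (i : 'I_n) (x : gT), (phi i x)%:~R = \sum_(c < n) rq (x^-1)%g i c * (phi c 1%g)%:~R :> rat.
Proof.
move=> phiZG i x; have := congr1 (fun F : {ffun gT -> rat} => F 1%g) (phiZG x^-1%g i).
by rewrite !ffunE invgK mulg1 => <-; apply: eq_bigr => c _; rewrite e_mulmx.
Qed.

Lemma prod_ZG_hom_entries (phis : 'I_r -> 'I_n -> gT -> int) :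
  (forall a, is_ZG_hom rho (phis a)) -> forall (k : tidx) (f : 'S_r) (x : gtuple),
  \prod_a (phis a (k (f a)) (x a))%:~R =
  \sum_(k' : tidx) (\prod_a (phis a (k' a) 1%g)%:~R) * tcoef (fun j => e_ (k (f j))) x k'.
Proof.
move=> phisZG k f x; under eq_bigr => a _ do rewrite (ZG_hom_entry (phisZG a)).
rewrite bigA_distr_bigA; apply: eq_bigr => k' _.
by rewrite /tcoef -big_split /=; apply: eq_bigr => a _; rewrite e_mulmx mulrC.
Qed.

Lemma wedge_phi_expand (phis : 'I_r -> 'I_n -> gT -> int) :
  (forall a, is_ZG_hom rho (phis a)) -> forall (t : tens) (g : gT),
  wedge_phi phis t g = \sum_(k : tidx) (\prod_a (phis a (k a) 1%g)%:~R) * Pmap rho t (k, g).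
Proof.
move=> phisZG t g; rewrite sum_ffunE.
under [RHS]eq_bigr do rewrite PmapE mulr_sumr.
rewrite [RHS]exchange_big /=; apply: eq_bigr => k0 _.
rewrite ffunE sum_ffunE; under [RHS]eq_bigr do rewrite mulrCA.
rewrite -mulr_sumr; congr (_ * _).
under [RHS]eq_bigr do rewrite /Pcoef mulr_sumr.
rewrite [RHS]exchange_big /=; apply: eq_bigr => f _.
rewrite !ffunE; under [RHS]eq_bigr do rewrite mulrCA.
rewrite -mulr_sumr; congr (_ * _).
under [RHS]eq_bigr do rewrite mulr_sumr.
rewrite [RHS]exchange_big /=; apply: eq_bigr => x _.
under eq_bigr do rewrite phiQ_e.
exact: prod_ZG_hom_entries.
Qed.

Lemma rubinP (t : tens) : rubin rho t <-> forall p, Pmap rho t p \is a Num.int.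
Proof.
split=> [t0 [k g] | Pint phis phisZG g].
  by rewrite -wedge_phi_coord; apply: t0 => a; apply: coord_hom_ZG.
rewrite wedge_phi_expand //; apply: rpred_sum => k _; apply: rpredM => //.
by apply: rpred_prod => a _; apply: intr_int.
Qed.

Lemma Pmap_star (i0 : 'I_r) (t : tens) : rubin rho t -> star rho i0 (Pmap rho t).
Proof.
by move=> /rubinP Pint; split=> //; split=> [f|s]; [apply: Pmap_permact | apply: Pmap_cmap].
Qed.

Lemma wedge_rel0 : wedge_rel rho (0 : tens).
Proof. by exists 0%N, (fun _ => 0), (fun _ => 0); split=> [[] //|]; rewrite big_ord0. Qed.

Lemma wedge_relD (a b : tens) : wedge_rel rho a -> wedge_rel rho b -> wedge_rel rho (a + b).
Proof.
case=> m1 [c1 [w1 [w1gen ->]]] [m2 [c2 [w2 [w2gen ->]]]].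
exists (m1 + m2)%N, (fun l => match split l with inl i => c1 i | inr j => c2 j end),
  (fun l => match split l with inl i => w1 i | inr j => w2 j end).
split; first by move=> l; case: (split l).
by rewrite big_split_ord /=; congr (_ + _); apply: eq_bigr => i _;
   [rewrite (unsplitK (inl i)) | rewrite (unsplitK (inr i))].
Qed.

Lemma wedge_relZ (c : rat) (a : tens) : wedge_rel rho a -> wedge_rel rho (fscale c a).
Proof.
case=> m [ca [w [wgen ->]]]; exists m, (fun l => c * ca l), w; split=> //.
apply/ffunP => k; rewrite ffunE !sum_ffunE mulr_sumr.
by apply: eq_bigr => l _; rewrite !ffunE mulrA.
Qed.

Lemma wedge_relB (a b : tens) : wedge_rel rho a -> wedge_rel rho b -> wedge_rel rho (a - b).
Proof.
move=> a0 /(wedge_relZ (-1)) b0.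
suff -> : a - b = a + fscale (-1) b by apply: wedge_relD.
by apply/ffunP => k; rewrite !ffunE mulN1r.
Qed.

Lemma wedge_rel_sum (I : finType) (P : pred I) (w : I -> tens) :
  (forall i, P i -> wedge_rel rho (w i)) -> wedge_rel rho (\sum_(i | P i) w i).
Proof. by move=> w0; apply: (big_ind (wedge_rel rho)) => //; [apply: wedge_rel0 | apply: wedge_relD]. Qed.

Lemma wedge_rel_gen (w : tens) : wedge_gen rho w -> wedge_rel rho w.
Proof.
move=> wgen; exists 1%N, (fun _ => 1), (fun _ => w); split=> //.
by rewrite big_ord1; apply/ffunP => k; rewrite ffunE mul1r.
Qed.

Lemma ptens_slotD (w : 'I_r -> 'rV[rat]_n) (i : 'I_r) (a b : 'rV[rat]_n) :
  ptens (upd w i (a + b)) = ptens (upd w i a) + ptens (upd w i b).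
Proof.
apply/ffunP => k; rewrite !ffunE (bigD1 i) //= [in RHS](bigD1 i) //= [X in _ = _ + X](bigD1 i) //=.
rewrite /upd !eqxx mxE mulrDl.
by congr (_ * _ + _ * _); apply: eq_bigr => j /negbTE ->.
Qed.

Lemma wedge_rel_swap (x : 'I_r -> 'rV[rat]_n) (i j : 'I_r) :
  i != j -> wedge_rel rho (ptens (fun l => x (tperm i j l)) + ptens x).
Proof.
move=> ij; pose V a b := upd (upd x j b) i a.
have alt a : wedge_rel rho (ptens (V a a)).
  apply: wedge_rel_gen; left; exists (V a a), i, j; split=> //.
  by rewrite /V /upd eqxx eq_sym (negbTE ij) eqxx.
have slotD_i a a' b : ptens (V (a + a') b) = ptens (V a b) + ptens (V a' b).
  exact: ptens_slotD.
have slotD_j a b b' : ptens (V a (b + b')) = ptens (V a b) + ptens (V a b').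
  have Vswap c : ptens (V a c) = ptens (upd (upd x i a) j c).
    by apply: eq_ptens => l; rewrite /V /upd; case: eqVneq => // ->; rewrite (negbTE ij).
  by rewrite !Vswap ptens_slotD.
have Vx : ptens (V (x i) (x j)) = ptens x.
  by apply: eq_ptens => l; rewrite /V /upd; case: eqVneq => [->|_] //; case: eqVneq => [->|].
have Vxt : ptens (V (x j) (x i)) = ptens (fun l => x (tperm i j l)).
  apply: eq_ptens => l; rewrite /V /upd; case: eqVneq => [->|li]; first by rewrite tpermL.
  by case: eqVneq => [->|lj]; [rewrite tpermR | rewrite tpermD // eq_sym].
have -> : ptens (fun l => x (tperm i j l)) + ptens x =
    ptens (V (x i + x j) (x i + x j)) - ptens (V (x i) (x i)) - ptens (V (x j) (x j)).
  rewrite slotD_i !slotD_j Vx Vxt; apply/ffunP => k; rewrite !ffunE; ring.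
by apply: wedge_relB; [apply: wedge_relB|].
Qed.

Lemma wedge_rel_perm (x : 'I_r -> 'rV[rat]_n) (f : 'S_r) :
  wedge_rel rho (ptens (fun j => x (f j)) - fscale ((-1) ^+ f) (ptens x)).
Proof.
have [ts -> dts] := prod_tpermP f; elim: ts dts => [_ | t ts IH /andP[dt dts]].
  rewrite big_nil odd_perm1 (@eq_ptens _ x) => [|j]; last by rewrite perm1.
  suff -> : ptens x - fscale ((-1) ^+ false) (ptens x) = 0 by apply: wedge_rel0.
  by apply/ffunP => k; rewrite !ffunE mul1r subrr.
rewrite big_cons odd_permM odd_tperm (dt : t.1 != t.2) /= signrN.
set f' := (\prod_(t <- ts) tperm t.1 t.2)%g.
rewrite (@eq_ptens _ (fun l => x (f' (tperm t.1 t.2 l)))) => [|l]; last by rewrite permM.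
set swapped := ptens (fun l => x (f' (tperm t.1 t.2 l))).
set unswapped := ptens (fun l => x (f' l)).
have -> : swapped - fscale (- (-1) ^+ f') (ptens x) =
    swapped + unswapped - (unswapped - fscale ((-1) ^+ f') (ptens x)).
  by move: ((-1) ^+ f') => sg; clearbody swapped unswapped; apply/ffunP => k; rewrite !ffunE; ring.
exact: wedge_relB (wedge_rel_swap _ dt) (IH dts).
Qed.

Lemma wedge_rel_twist (i0 : 'I_r) (s : gtuple) (x : 'I_r -> 'rV[rat]_n) :
  wedge_rel rho (ptens (fun j => x j *m rq (s j)^-1) -
                 ptens (upd x i0 (x i0 *m rq (\prod_j s j)^-1)%g)).
Proof.
elim/(@kill_slot_ind r (fun j => j != i0)): s x => [s s1 | s j ji IH] x.
  have -> : (\prod_j s j)%g = s i0 by rewrite (bigD1 i0) //= big1 ?mulg1 // => j /s1.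
  rewrite (@eq_ptens _ (upd x i0 (x i0 *m rq (s i0)^-1))) ?subrr; first exact: wedge_rel0.
  by move=> j; rewrite /upd; case: eqVneq => [->|/s1->] //; rewrite invg1 rhoQ1 mulmx1.
have i0j : (i0 == j) = false by rewrite eq_sym (negbTE ji).
pose x' := upd x j (x j *m rq (s j)^-1).
have -> : ptens (fun l => x l *m rq (s l)^-1) =
    ptens (fun l => x' l *m rq (kill_slot j s l)^-1).
  by apply: eq_ptens => l; rewrite /x' /upd ffunE; case: eqP => [->|_] //; rewrite invg1 rhoQ1 mulmx1.
have balance : wedge_rel rho
    (ptens (upd x' i0 (x' i0 *m rq (\prod_l kill_slot j s l)^-1)%g) -
     ptens (upd x i0 (x i0 *m rq (\prod_l s l)^-1)%g)).
  apply: wedge_rel_gen; right.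
  exists (upd x i0 (x i0 *m rq (\prod_l kill_slot j s l)^-1)%g), j, i0, (s j)^-1%g.
  congr (_ - _); apply: eq_ptens => l; rewrite /x' /upd.
    by case: eqVneq => [->|]; rewrite ?i0j ?(negbTE ji) ?eqxx.
  rewrite eqxx (prod_kill_slot j s) invMg rhoQM rhoQC mulmxA.
  by case: (l == i0).
by have := wedge_relD (IH x') balance; rewrite addrA subrK.
Qed.

(* The number of pairs (f, x) indexing the summands of each coefficient of [P]. *)
Definition Pscale : rat := (r`! * fibre_card r 1)%:R.

Definition Pinv (y : gtens) : tens := [ffun k => y (k, 1%g) / Pscale].

Lemma Pscale_neq0 : Pscale != 0.
Proof. by rewrite pnatr_eq0 -lt0n muln_gt0 fact_gt0 fibre_card1_gt0. Qed.

(* Here and below, the slot [i0] only witnesses [0 < r]. *)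
Lemma wedge_rel_ptens_Pinv (i0 : 'I_r) (v : 'I_r -> 'rV[rat]_n) :
  wedge_rel rho (ptens v - Pinv (Pmap rho (ptens v))).
Proof.
pose twisted (f : 'S_r) (x : gtuple) := ptens (fun j => v (f j) *m rq (x j)^-1).
have -> : ptens v - Pinv (Pmap rho (ptens v)) =
    \sum_(f : 'S_r) \sum_(x : gtuple | (\prod_j x j == 1)%g)
      fscale Pscale^-1 (ptens v - fscale ((-1) ^+ f) (twisted f x)).
  apply/ffunP => k; rewrite sum_ffunE.
  under eq_bigr do (rewrite sum_ffunE; under eq_bigr do rewrite !ffunE mulrBr).
  under eq_bigr do rewrite sumrB; rewrite sumrB !ffunE Pmap_ptens; congr (_ - _).
    rewrite sum_fibre_const sumr_const card_Sn -mulrnA -mulr_natr mulnC -/Pscale.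
    by rewrite mulrAC mulVf ?mul1r ?Pscale_neq0.
  by rewrite mulrC mulr_sumr; apply: eq_bigr => f _; rewrite !mulr_sumr.
apply: wedge_rel_sum => f _; apply: wedge_rel_sum => x /eqP x1; apply: wedge_relZ.
have twist := wedge_rel_twist i0 x (fun j => v (f j)).
rewrite x1 invg1 rhoQ1 (@eq_ptens (upd _ _ _) (fun j => v (f j))) in twist; last first.
  by move=> j; rewrite /upd mulmx1; case: eqP => [->|].
have perm := wedge_rel_perm v f.
set sg := (-1) ^+ f in perm *; set vf := ptens (fun j => v (f j)) in twist perm.
have -> : ptens v - fscale sg (twisted f x) =
    fscale (- sg) (twisted f x - vf) + fscale (- sg) (vf - fscale sg (ptens v)).
  rewrite /sg; clearbody twisted vf; apply/ffunP => k; rewrite !ffunE.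
  by case: (odd_perm f); rewrite /= ?expr1 ?expr0; ring.
by apply: wedge_relD; apply: wedge_relZ.
Qed.

Lemma wedge_rel_Pinv (i0 : 'I_r) (t : tens) : wedge_rel rho (t - Pinv (Pmap rho t)).
Proof.
have -> : t - Pinv (Pmap rho t) =
    \sum_k fscale (t k) (ptens (fun j => e_ (k j)) - Pinv (Pmap rho (ptens (fun j => e_ (k j))))).
  apply/ffunP => k'; rewrite sum_ffunE.
  under eq_bigr do rewrite !ffunE mulrBr; rewrite sumrB !ffunE; congr (_ - _).
    have := congr1 (fun F : tens => F k') (tens_basis_decomp t); rewrite sum_ffunE => {1}->.
    by apply: eq_bigr => k _; rewrite !ffunE.
  rewrite PmapE mulr_suml; apply: eq_bigr => k _.
  by rewrite Pmap_ptens mulrA.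
by apply: wedge_rel_sum => k _; apply/wedge_relZ/wedge_rel_ptens_Pinv.
Qed.

Lemma Pmap_inj_wedge_rel (i0 : 'I_r) (t t' : tens) :
  Pmap rho t = Pmap rho t' -> wedge_rel rho (t - t').
Proof.
move=> tt'; suff -> : t - t' = t - t' - Pinv (Pmap rho (t - t')) by apply: wedge_rel_Pinv.
by rewrite Pmap_sub tt' subrr; apply/ffunP => k; rewrite !ffunE mul0r subr0.
Qed.

Lemma sum_prod_split_slot (z : tidx -> rat) (B : 'I_r -> 'M[rat]_n) (X : 'M[rat]_n)
    (j : 'I_r) (k : tidx) : B j = 1%:M ->
  \sum_(kap : tidx) z kap * \prod_i (if i == j then X else B i) (kap i) (k i) =
  \sum_(l < n) (\sum_(kap : tidx) z kap * \prod_i B i (kap i) (set_slot k j l i)) * X l (k j).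
Proof.
move=> Bj1; under [RHS]eq_bigr do rewrite mulr_suml.
rewrite [RHS]exchange_big /=; apply: eq_bigr => kap _.
rewrite [RHS](bigD1 (kap j)) //= [X in _ = _ + X]big1 ?addr0; last first.
  move=> l /negbTE lj; rewrite (bigD1 j) //= ffunE eqxx Bj1 mxE eq_sym lj.
  by rewrite mulr0n mul0r mulr0 mul0r.
rewrite (bigD1 j) //= [in RHS](bigD1 j) //= ffunE !eqxx Bj1 mxE eqxx mulr1n mul1r.
rewrite -[RHS]mulrA; congr (_ * _); rewrite mulrC; congr (_ * _).
by apply: eq_bigr => i /negbTE ij; rewrite ffunE ij.
Qed.

Section StarElements.
Variables (i0 : 'I_r) (y : gtens).
Hypothesis y_alt : forall f : 'S_r, permact f y = fscale ((-1) ^+ f) y.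
Hypothesis y_cmap : forall s : gT, cmap rho i0 s y = grp_act s y.

Lemma star_perm (f : 'S_r) (k : tidx) (g : gT) : y ([ffun j => k (f j)], g) = (-1) ^+ f * y (k, g).
Proof. by have := congr1 (fun F : gtens => F (k, g)) (y_alt f); rewrite !ffunE. Qed.

(* Conjugate the relation in slot [i0] by the transposition of [i0] and [j]. *)
Lemma star_cmap_slot (j : 'I_r) (s g : gT) (k : tidx) :
  \sum_(l < n) y (set_slot k j l, g) * rq s l (k j) = y (k, s^-1 * g)%g.
Proof.
have [->|ji] := eqVneq j i0.
  by have := congr1 (fun F : gtens => F (k, g)) (y_cmap s); rewrite !ffunE.
pose t := tperm i0 j; pose kt : tidx := [ffun m => k (t m)].
have y_swap (k' : tidx) h : y (k', h) = - y ([ffun m => k' (t m)], h).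
  by rewrite star_perm odd_tperm eq_sym ji expr1 mulN1r opprK.
transitivity (- \sum_(l < n) y (set_slot kt i0 l, g) * rq s l (kt i0)).
  rewrite -sumrN; apply: eq_bigr => l _; rewrite y_swap mulNr.
  congr (- (y (_, g) * _)); last by rewrite ffunE /t tpermL.
  apply/ffunP => m; rewrite !ffunE (canF_eq (tpermK i0 j)) tpermR.
  by case: eqP.
have := congr1 (fun F : gtens => F (kt, g)) (y_cmap s); rewrite !ffunE /= => ->.
by rewrite (y_swap k).
Qed.

Lemma star_twisted_sum (x : gtuple) (g : gT) (k : tidx) :
  \sum_(kap : tidx) y (kap, g) * \prod_j rq (x j)^-1 (kap j) (k j) = y (k, \prod_j x j * g)%g.
Proof.
elim/(@kill_slot_ind r predT): x g k => [x x1 | x j _ IH] g k.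
  have -> : (\prod_j x j)%g = 1%g by apply: big1 => j _; rewrite x1.
  under eq_bigr do (under eq_bigr do rewrite x1 // invg1 rhoQ1 mxE; rewrite prod_eq_entries).
  rewrite mul1g (bigD1 k) //= eqxx mulr1 big1 ?addr0 // => kap /negbTE kapk.
  by rewrite kapk mulr0.
have -> : (\prod_i x i * g = (x j)^-1^-1 * (\prod_i kill_slot j x i * g))%g.
  by rewrite invgK (prod_kill_slot j x) [(_ * x j)%g]mulgC mulgA.
rewrite -(star_cmap_slot j).
under [RHS]eq_bigr do rewrite -IH.
rewrite -sum_prod_split_slot ?ffunE ?eqxx ?invg1 ?rhoQ1 //.
apply: eq_bigr => kap _; congr (_ * _); apply: eq_bigr => i _.
by rewrite ffunE; case: eqP => [->|].
Qed.

Lemma star_sum_tcoef (f : 'S_r) (x : gtuple) (k : tidx) :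
  \sum_(k0 : tidx) y (k0, 1%g) * tcoef (fun j => e_ (k0 (f j))) x k = (-1) ^+ f * y (k, \prod_j x j)%g.
Proof.
rewrite (reindex (fun kap : tidx => [ffun j => kap ((f^-1)%g j)])); last first.
  by apply: onW_bij; exists (fun k0 : tidx => [ffun j => k0 (f j)]) => kap;
     apply/ffunP => j; rewrite !ffunE ?permK ?permKV.
rewrite -[(\prod_j x j)%g]mulg1 -star_twisted_sum mulr_sumr; apply: eq_bigr => kap _.
rewrite /tcoef (eq_bigr (fun j => rq (x j)^-1 (kap j) (k j))) => [|j _]; last by rewrite ffunE permK e_mulmx.
by rewrite (star_perm (f^-1)%g kap 1%g) odd_permV mulrA.
Qed.

Lemma Pmap_Pinv : Pmap rho (Pinv y) = y.
Proof.
apply/ffunP => -[k g]; rewrite PmapE.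
transitivity (\sum_(f : 'S_r) \sum_(x : gtuple | (\prod_j x j == g)%g) y (k, g) / Pscale).
  under eq_bigr do rewrite ffunE !mulr_sumr.
  rewrite exchange_big /=; apply: eq_bigr => f _.
  under eq_bigr do rewrite mulrCA !mulr_sumr.
  rewrite exchange_big /=; apply: eq_bigr => x /eqP xg.
  transitivity ((-1) ^+ f / Pscale * \sum_(k0 : tidx) y (k0, 1%g) * tcoef (fun j => e_ (k0 (f j))) x k).
    by rewrite mulr_sumr; apply: eq_bigr => k0 _; rewrite -!mulrA; congr (_ * _); rewrite mulrCA.
  by rewrite star_sum_tcoef xg mulrCA !mulrA -signr_addb addbb expr0 mul1r mulrC.
rewrite sum_fibre_const (fibre_card_const i0) sumr_const card_Sn -mulrnA.
by rewrite -mulr_natr mulnC -/Pscale mulfVK ?Pscale_neq0.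
Qed.

End StarElements.

End Lattice.

End AbelianGroup.

Unset Implicit Arguments.

Theorem proposition3p3 (gT : finGroupType) (Hab : abelian [set: gT])
  (n : nat) (rho : gT -> 'M[int]_n) (Hrho : is_lattice_rep rho)
  (r : nat) (hr : (0 < r)%N) :
  let i0 := Ordinal hr in
  (* P is well defined on Q /\^r_{Z[G]} M *)
  (forall t : {ffun {ffun 'I_r -> 'I_n} -> rat}, wedge_rel rho t -> Pmap rho t = 0) /\
  (* P is Z[G]-linear *)
  (forall (s : gT) (t : {ffun {ffun 'I_r -> 'I_n} -> rat}), Pmap rho (tact rho i0 s t) = grp_act s (Pmap rho t)) /\
  (* P maps /\_0^r M into (M,G)^r_star *)
  (forall t : {ffun {ffun 'I_r -> 'I_n} -> rat}, rubin rho t -> star rho i0 (Pmap rho t)) /\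
  (* injective on /\_0^r M *)
  (forall t t' : {ffun {ffun 'I_r -> 'I_n} -> rat}, rubin rho t -> rubin rho t' ->
      Pmap rho t = Pmap rho t' -> wedge_rel rho (t - t')) /\
  (* onto (M,G)^r_star *)
  (forall y : {ffun {ffun 'I_r -> 'I_n} * gT -> rat}, star rho i0 y -> exists t, rubin rho t /\ Pmap rho t = y).
Proof.
move=> i0; have mulgC : commutative (@mulg gT).
  by move=> a b; apply: (centsP Hab a (in_setT a) b (in_setT b)).
split; first by move=> t; exact: (Pmap_wedge_rel mulgC Hrho).
split; first exact: (Pmap_tact mulgC Hrho i0).
split; first by move=> t; exact: (Pmap_star mulgC Hrho i0).
split; first by move=> t t' _ _; exact: (Pmap_inj_wedge_rel mulgC Hrho i0).
move=> y [y_int [y_alt y_cmap]]; have Py := Pmap_Pinv mulgC Hrho y_alt y_cmap.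
by exists (Pinv y); split=> //; apply/(rubinP mulgC Hrho); rewrite Py.
Qed.
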